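(* Let $\Phi\in\mathbb{R}^{z\times m}$ be a signalling scheme, $q$ a prior, and $\zeta^u$ a signal with $\sum_\ell\phi^u_\ell q_\ell>0$. For a flow $f\in\mathcal{H}$ let $S_u(f)$ be the set of $\psi\in\Delta_1^m$ such that $$\sum_{s\in[m]}\phi^u_s\big(C^{\theta_s}_p(f)-C^{\theta_s}_r(f)\big)\psi_s=0\ \text{ for all } p,r\in\mathcal{P} \text{ with } f_p>0,f_r>0,$$ $$\sum_{s\in[m]}\phi^u_s\big(C^{\theta_s}_p(f)-C^{\theta_s}_r(f)\big)\psi_s\le0\ \text{ for all } p,r\in\mathcal{P} \text{ with } f_p>0,f_r=0.$$ Then for any two $\widetilde q^{\zeta^u}$-WE $\widetilde f,\widehat f\in\mathcal{W}^{\widetilde q^{\zeta^u}}$ we have $S_u(\widetilde f)=S_u(\widehat f)$.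
   Context: Let $\mathcal{G}=(\mathcal{V},\mathcal{E})$ be a finite directed graph with an origin $v_o$ and a destination $v_d$, and let $\mathcal{P}$ be the (finite) set of acyclic directed paths from $v_o$ to $v_d$, $n=|\mathcal{P}|$. The set of feasible path-flows is $\mathcal{H}=\{f\in\mathbb{R}^n_{\ge0}:\sum_{p\in\mathcal{P}}f_p=1\}$. For a path-flow $f$, the flow on edge $e_k$ is $f_{e_k}=\sum_{p\ni e_k}f_p$. There is a finite set of states $\Theta=\{\theta_1,\dots,\theta_m\}$; in each state $\theta_s$ each edge $e_k$ has a known cost function $C^{\theta_s}_{e_k}:\mathbb{R}_{\ge0}\to\mathbb{R}_{\ge0}$ that is continuous and strictly increasing. The cost of path $p$ in state $\theta_s$ is $C^{\theta_s}_p(f)=\sum_{e_k\in p}C^{\theta_s}_{e_k}(f_{e_k})$. For $\varphi\in\Delta_1^m:=\{x\in\mathbb{R}^m_{\ge0}:\sum_i x_i=1\}$ the expected cost of path $p$ is $C^\varphi_p(f)=\sum_{s}\varphi_sC^{\theta_s}_p(f)$. A flow $f\in\mathcal{H}$ is a $\varphi$-based Wardrop equilibrium ($\varphi$-WE) if for all $p$ with $f_p>0$ we have $C^\varphi_p(f)\le C^\varphi_r(f)$ for all $r\in\mathcal{P}$; $\mathcal{W}^\varphi$ denotes the set of $\varphi$-WE. A prior is a $q\in\Delta_1^m$ with $q_s>0$ for all $s$. A (public) signalling scheme with signals $\zeta^1,\dots,\zeta^z$ is a column-stochastic matrix $\Phi=(\phi^u_s)\in\mathbb{R}^{z\times m}_{\ge0}$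 (each column sums to $1$), where $\phi^u_s$ is the probability of sending $\zeta^u$ in state $\theta_s$. The posterior after $\zeta^u$ is $\widetilde q^{\zeta^u}_s=\phi^u_sq_s/\sum_{\ell}\phi^u_\ell q_\ell$. *)

From HB Require Import structures.
From mathcomp Require Import all_boot all_order all_algebra.
From mathcomp Require Import classical_sets boolp reals topology normedtype.
Set Implicit Arguments. Unset Strict Implicit. Unset Printing Implicit Defensive.
Import Order.TTheory GRing.Theory Num.Theory.
Import numFieldNormedType.Exports.
Local Open Scope ring_scope.
Local Open Scope classical_set_scope.

(* A directed graph on vertex type V: the edge set is Ed : {set V * V};
   an edge e = (e.1, e.2) goes from e.1 to e.2. A path is a sequence of edges. *)

Fixpoint walk (V : finType) (Ed : {set V * V}) (vd x : V) (s : seq (V * V)) : bool :=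
  match s with
  | [::] => x == vd
  | e :: s' => [&& e \in Ed, e.1 == x & walk Ed vd e.2 s']
  end.

Definition od_path (V : finType) (Ed : {set V * V}) (vo vd : V) (s : seq (V * V)) : Prop :=
  walk Ed vd vo s /\ uniq (vo :: map snd s).

Definition enumerates_paths (V : finType) (Ed : {set V * V}) (vo vd : V)
  (paths : seq (seq (V * V))) : Prop :=
  uniq paths /\ forall p, p \in paths <-> od_path Ed vo vd p.

Section Traffic.
Variables (R : realType) (V : finType) (m : nat).
Variable (paths : seq (seq (V * V))).

Definition simplex (x : 'I_m -> R) : Prop :=
  (forall s, 0 <= x s) /\ \sum_(s < m) x s = 1.

(* feasible path flows H (path flows are functions on paths; only values on
   the enumerated paths matter) *)
Definition feasible (f : seq (V * V) -> R) : Prop :=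
  (forall p, p \in paths -> 0 <= f p) /\ \sum_(p <- paths) f p = 1.

Definition edge_flow (f : seq (V * V) -> R) (e : V * V) : R :=
  \sum_(p <- paths | e \in p) f p.

Definition path_cost (C : 'I_m -> V * V -> R -> R) (s : 'I_m)
  (p : seq (V * V)) (f : seq (V * V) -> R) : R :=
  \sum_(e <- p) C s e (edge_flow f e).

Definition exp_cost (C : 'I_m -> V * V -> R -> R) (phi : 'I_m -> R)
  (p : seq (V * V)) (f : seq (V * V) -> R) : R :=
  \sum_(s < m) phi s * path_cost C s p f.

Definition wardrop (C : 'I_m -> V * V -> R -> R) (phi : 'I_m -> R)
  (f : seq (V * V) -> R) : Prop :=
  feasible f /\
  forall p, p \in paths -> 0 < f p ->
    forall r, r \in paths -> exp_cost C phi p f <= exp_cost C phi r f.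

Definition admissible_costs (C : 'I_m -> V * V -> R -> R) : Prop :=
  forall s e,
    {within [set x : R | 0 <= x], continuous (C s e)} /\
    (forall x, 0 <= x -> 0 <= C s e x) /\
    (forall x y, 0 <= x -> x < y -> C s e x < C s e y).

Definition prior (q : 'I_m -> R) : Prop := simplex q /\ forall s, 0 < q s.

Definition signalling_scheme (z : nat) (Phi : 'M[R]_(z, m)) : Prop :=
  (forall u s, 0 <= Phi u s) /\ forall s, \sum_(u < z) Phi u s = 1.

Definition posterior (z : nat) (Phi : 'M[R]_(z, m)) (q : 'I_m -> R) (u : 'I_z)
  : 'I_m -> R :=
  fun s => Phi u s * q s / \sum_(l < m) Phi u l * q l.

Definition S_set (z : nat) (C : 'I_m -> V * V -> R -> R) (Phi : 'M[R]_(z, m))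
  (u : 'I_z) (f : seq (V * V) -> R) : set ('I_m -> R) :=
  [set psi | simplex psi /\
    (forall p r, p \in paths -> r \in paths -> 0 < f p -> 0 < f r ->
       \sum_(s < m) Phi u s * (path_cost C s p f - path_cost C s r f) * psi s = 0) /\
    (forall p r, p \in paths -> r \in paths -> 0 < f p -> f r = 0 ->
       \sum_(s < m) Phi u s * (path_cost C s p f - path_cost C s r f) * psi s <= 0)].

End Traffic.

From HB Require Import structures.
From mathcomp Require Import all_boot all_order all_algebra.
From mathcomp Require Import classical_sets boolp reals topology normedtype.
From mathcomp Require Import ring lra.
Set Implicit Arguments. Unset Strict Implicit. Unset Printing Implicit Defensive.
Import Order.TTheory GRing.Theory Num.Theory.
Import numFieldNormedType.Exports.
Local Open Scope ring_scope.
Local Open Scope classical_set_scope.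

(* Write phi_psi s := Phi u s * psi s.  The defining conditions of S_u(f) say
   precisely that, among the paths, those used by f have minimal phi_psi-expected
   cost; hence S_u(f) = { psi in the simplex | f is a phi_psi-Wardrop
   equilibrium } (lemma S_set_wardrop).  The theorem then follows from two facts:
   (1) all posterior-based equilibria have the same edge flows (Beckmann-type
       monotonicity argument: add the two variational inequalities and use that
       the expected edge costs are strictly increasing), and
   (2) being a phi-Wardrop equilibrium depends on a feasible flow only through
       its edge flows, for an ARBITRARY weight vector phi (path costs are sums of
       edge costs, so the mean cost of a flow is a function of its edge flows). *)

Section PathFlows.
Variables (R : realType) (V : finType) (paths : seq (seq (V * V))).
Implicit Types (f h X : seq (V * V) -> R).

(* f only uses paths of minimal cost X; a phi-Wardrop equilibrium is a feasible
   flow supported on the minima of its own expected path costs. *)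
Definition supported_on_minima f X : Prop :=
  forall p, p \in paths -> 0 < f p -> forall r, r \in paths -> X p <= X r.

Lemma exists_pos_of_sum1 (I : eqType) (r : seq I) (x : I -> R) :
  (forall i, i \in r -> 0 <= x i) -> \sum_(i <- r) x i = 1 ->
  exists2 i, i \in r & 0 < x i.
Proof.
move=> x_ge0 x_sum1.
have [/hasP //|/hasPn x_npos] := boolP (has (fun i => 0 < x i) r).
suff : \sum_(i <- r) x i = 0 by rewrite x_sum1 => /eqP; rewrite oner_eq0.
rewrite big1_seq // => i /andP[_ ir]; apply/eqP.
by rewrite eq_le x_ge0 // andbT leNgt x_npos.
Qed.

Lemma feasible_support f : feasible paths f -> exists2 p, p \in paths & 0 < f p.
Proof. by case=> f_ge0 f_sum1; exact: exists_pos_of_sum1 f_ge0 f_sum1. Qed.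

Lemma mean_cost_at_support f X p0 :
  feasible paths f -> supported_on_minima f X -> p0 \in paths -> 0 < f p0 ->
  \sum_(p <- paths) f p * X p = X p0.
Proof.
move=> [f_ge0 f_sum1] fmin p0_in fp0_gt0.
rewrite big_seq (eq_bigr (fun p => f p * X p0)); last first.
  move=> p p_in; have [->|fp_neq0] := eqVneq (f p) 0; first by rewrite !mul0r.
  have fp_gt0 : 0 < f p by rewrite lt_def fp_neq0 f_ge0.
  by congr (_ * _); apply/le_anti; rewrite !fmin.
by rewrite -big_seq -big_distrl /= f_sum1 mul1r.
Qed.

Lemma mean_cost_le f h X :
  feasible paths f -> feasible paths h -> supported_on_minima f X ->
  \sum_(p <- paths) f p * X p <= \sum_(p <- paths) h p * X p.
Proof.
move=> ffeas [h_ge0 h_sum1] fmin.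
have [p0 p0_in fp0_gt0] := feasible_support ffeas.
rewrite (mean_cost_at_support ffeas fmin p0_in fp0_gt0).
rewrite -[X p0]mul1r -h_sum1 big_distrl /= !big_seq.
by apply: ler_sum => p p_in; rewrite ler_wpM2l ?h_ge0 ?fmin.
Qed.

Lemma minima_of_mean_cost_le f h X :
  feasible paths f -> feasible paths h -> supported_on_minima f X ->
  \sum_(p <- paths) h p * X p <= \sum_(p <- paths) f p * X p ->
  supported_on_minima h X.
Proof.
move=> ffeas [h_ge0 h_sum1] fmin hmean.
have [p0 p0_in fp0_gt0] := feasible_support ffeas.
rewrite (mean_cost_at_support ffeas fmin p0_in fp0_gt0) in hmean.
have excess_ge0 p : p \in paths -> 0 <= h p * (X p - X p0).
  by move=> p_in; rewrite mulr_ge0 ?h_ge0 // subr_ge0 fmin.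
have excess0 : \sum_(p <- paths) h p * (X p - X p0) == 0.
  rewrite eq_le big_seq sumr_ge0 ?andbT // -big_seq.
  under eq_bigr do rewrite mulrBr.
  by rewrite sumrB -big_distrl /= h_sum1 mul1r subr_le0.
move=> p p_in hp_gt0 r r_in.
move: excess0; rewrite big_seq psumr_eq0 // => /allP /(_ p p_in).
rewrite p_in mulf_eq0 subr_eq0 gt_eqF //= => /eqP ->.
exact: fmin.
Qed.

Lemma sum_path_cost_edges (w : V * V -> R) h :
  (forall p, p \in paths -> uniq p) ->
  \sum_(p <- paths) h p * \sum_(e <- p) w e =
  \sum_(e : V * V) w e * edge_flow paths h e.
Proof.
move=> paths_uniq.
under [RHS]eq_bigr => e _ do
  rewrite /edge_flow mulrC big_distrl /= big_mkcond.
rewrite exchange_big /= !big_seq; apply: eq_bigr => p p_in.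
by rewrite big_uniq ?paths_uniq //= mulr_sumr big_mkcond.
Qed.

End PathFlows.

Section ExpectedCosts.
Variables (R : realType) (V : finType) (m : nat) (paths : seq (seq (V * V))).
Variable (C : 'I_m -> V * V -> R -> R).
Implicit Types (phi : 'I_m -> R) (f h : seq (V * V) -> R).

Definition edge_exp_cost phi (e : V * V) (x : R) : R := \sum_(s < m) phi s * C s e x.

Definition strictly_increasing_nonneg (c : R -> R) : Prop :=
  forall x y, 0 <= x -> x < y -> c x < c y.

Lemma exp_cost_edges phi p f :
  exp_cost paths C phi p f = \sum_(e <- p) edge_exp_cost phi e (edge_flow paths f e).
Proof.
rewrite /exp_cost /path_cost /edge_exp_cost.
by under eq_bigr do rewrite mulr_sumr; rewrite exchange_big.
Qed.

Lemma mean_exp_cost phi f h :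
  (forall p, p \in paths -> uniq p) ->
  \sum_(p <- paths) h p * exp_cost paths C phi p f =
  \sum_(e : V * V) edge_exp_cost phi e (edge_flow paths f e) * edge_flow paths h e.
Proof.
by move=> paths_uniq; rewrite -sum_path_cost_edges //; apply: eq_bigr => p _;
  rewrite exp_cost_edges.
Qed.

Lemma exp_cost_edge_flow phi p f1 f2 :
  edge_flow paths f1 =1 edge_flow paths f2 ->
  exp_cost paths C phi p f1 = exp_cost paths C phi p f2.
Proof.
by move=> same_flow; rewrite !exp_cost_edges; apply: eq_bigr => e _;
  rewrite same_flow.
Qed.

Lemma wardrop_edge_flow phi f1 f2 :
  (forall p, p \in paths -> uniq p) -> feasible paths f2 ->
  edge_flow paths f1 =1 edge_flow paths f2 ->
  wardrop paths C phi f1 -> wardrop paths C phi f2.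
Proof.
move=> paths_uniq f2feas same_flow [f1feas f1min]; split=> //.
have same_cost p : exp_cost paths C phi p f2 = exp_cost paths C phi p f1.
  exact/esym/exp_cost_edge_flow.
move=> p p_in f2p_gt0 r r_in; rewrite !same_cost; move: p p_in f2p_gt0 r r_in.
apply: (minima_of_mean_cost_le f1feas f2feas f1min).
rewrite !mean_exp_cost // le_eqVlt; apply/orP; left; apply/eqP.
by apply: eq_bigr => e _; rewrite same_flow.
Qed.

Lemma increasing_gap_gt0 (c : R -> R) a b :
  strictly_increasing_nonneg c -> 0 <= a -> 0 <= b -> a != b ->
  0 < (c a - c b) * (a - b).
Proof.
move=> c_incr a_ge0 b_ge0; rewrite neq_lt => /orP[ab|ba].
  by have := c_incr _ _ a_ge0 ab; nra.
by have := c_incr _ _ b_ge0 ba; nra.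
Qed.

Lemma increasing_gap_ge0 (c : R -> R) a b :
  strictly_increasing_nonneg c -> 0 <= a -> 0 <= b -> 0 <= (c a - c b) * (a - b).
Proof.
move=> c_incr a_ge0 b_ge0; have [->|ab] := eqVneq a b; first by rewrite !subrr mulr0.
exact/ltW/increasing_gap_gt0.
Qed.

Lemma edge_exp_cost_increasing phi e :
  (forall s, 0 <= phi s) -> (exists s, 0 < phi s) ->
  (forall s, strictly_increasing_nonneg (C s e)) ->
  strictly_increasing_nonneg (edge_exp_cost phi e).
Proof.
move=> phi_ge0 [s0 phis0_gt0] C_incr x y x_ge0 xy.
rewrite /edge_exp_cost (bigD1 s0) //= [X in _ < X](bigD1 s0) //=.
rewrite ltr_leD ?ltr_pM2l ?C_incr //.
by apply: ler_sum => s _; rewrite ler_wpM2l // ltW ?C_incr.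
Qed.

Lemma edge_flow_ge0 f e : feasible paths f -> 0 <= edge_flow paths f e.
Proof.
by case=> f_ge0 _; rewrite /edge_flow big_seq_cond sumr_ge0 // => p /andP[/f_ge0].
Qed.

(* Adding the variational
   inequalities of the two equilibria gives
   sum_e (W_e(g1 e) - W_e(g2 e)) (g1 e - g2 e) <= 0, a sum of nonnegative
   terms which are positive wherever g1 e <> g2 e. *)
Lemma wardrop_edge_flow_unique phi f1 f2 :
  (forall p, p \in paths -> uniq p) ->
  (forall s, 0 <= phi s) -> (exists s, 0 < phi s) ->
  (forall s e, strictly_increasing_nonneg (C s e)) ->
  wardrop paths C phi f1 -> wardrop paths C phi f2 ->
  edge_flow paths f1 =1 edge_flow paths f2.
Proof.
move=> paths_uniq phi_ge0 phi_pos C_incr [f1feas f1min] [f2feas f2min].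
have VI1 := mean_cost_le f1feas f2feas f1min.
have VI2 := mean_cost_le f2feas f1feas f2min.
rewrite !mean_exp_cost // in VI1 VI2.
set g1 := edge_flow paths f1 in VI1 VI2 *; set g2 := edge_flow paths f2 in VI1 VI2 *.
pose W e := edge_exp_cost phi e.
have W_incr e : strictly_increasing_nonneg (W e).
  exact: edge_exp_cost_increasing.
pose gap e := (W e (g1 e) - W e (g2 e)) * (g1 e - g2 e).
have gap_ge0 e : 0 <= gap e by rewrite increasing_gap_ge0 ?edge_flow_ge0.
have gap_sum0 : \sum_e gap e == 0.
  rewrite eq_le sumr_ge0 // andbT.
  have -> : \sum_e gap e =
      (\sum_e W e (g1 e) * g1 e - \sum_e W e (g1 e) * g2 e) +
      (\sum_e W e (g2 e) * g2 e - \sum_e W e (g2 e) * g1 e).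
    by rewrite -!sumrB -big_split /=; apply: eq_bigr => e _; rewrite /gap; ring.
  by rewrite /W; lra.
move=> e; apply/eqP; apply: contraLR gap_sum0 => g_neq.
rewrite psumr_eq0 //; apply/allPn; exists e; first exact: mem_index_enum.
by rewrite gt_eqF // increasing_gap_gt0 ?edge_flow_ge0.
Qed.

Section Signal.
Variables (z : nat) (Phi : 'M[R]_(z, m)) (u : 'I_z).

Lemma S_sum_exp_cost (psi : 'I_m -> R) p r f :
  \sum_(s < m) Phi u s * (path_cost paths C s p f - path_cost paths C s r f) * psi s
  = exp_cost paths C (fun s => Phi u s * psi s) p f
    - exp_cost paths C (fun s => Phi u s * psi s) r f.
Proof. by rewrite /exp_cost -sumrB; apply: eq_bigr => s _; ring. Qed.

Lemma S_set_wardrop f psi : feasible paths f ->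
  S_set paths C Phi u f psi <->
  simplex psi /\ wardrop paths C (fun s => Phi u s * psi s) f.
Proof.
move=> ffeas; rewrite /S_set /=.
split=> [[psi_simplex [used_eq unused_le]] | [psi_simplex [_ fmin]]].
  split=> //; split=> // p p_in fp_gt0 r r_in; rewrite -subr_le0 -S_sum_exp_cost.
  have := proj1 ffeas r r_in; rewrite le_eqVlt => /orP[/eqP/esym fr0|fr_gt0].
    exact: unused_le.
  by rewrite used_eq.
split=> //; split=> p r p_in r_in fp_gt0 fr; rewrite S_sum_exp_cost.
  by apply/eqP; rewrite subr_eq0 eq_le !fmin.
by rewrite subr_le0 fmin.
Qed.

Lemma S_set_edge_flow f1 f2 :
  (forall p, p \in paths -> uniq p) ->
  feasible paths f1 -> feasible paths f2 ->
  edge_flow paths f1 =1 edge_flow paths f2 ->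
  S_set paths C Phi u f1 `<=` S_set paths C Phi u f2.
Proof.
move=> paths_uniq f1feas f2feas same_flow psi /(S_set_wardrop _ f1feas)[simp W].
by apply/(S_set_wardrop _ f2feas); split; last exact: wardrop_edge_flow W.
Qed.

(* the posterior is a probability vector; in particular it gives positive weight
   to some state, as needed for the uniqueness of equilibrium edge flows *)
Lemma posterior_simplex (q : 'I_m -> R) :
  (forall s, 0 <= Phi u s) -> (forall s, 0 <= q s) ->
  0 < \sum_(l < m) Phi u l * q l -> simplex (posterior Phi q u).
Proof.
move=> Phi_ge0 q_ge0 mass_gt0; split=> [s|].
  by rewrite /posterior divr_ge0 ?mulr_ge0 // ltW.
by rewrite /posterior -big_distrl /= mulfV ?gt_eqF.
Qed.

End Signal.
End ExpectedCosts.

Lemma od_path_uniq (V : finType) (Ed : {set V * V}) (vo vd : V) p :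
  od_path Ed vo vd p -> uniq p.
Proof. by case=> _ /= /andP[_ /map_uniq]. Qed.

Theorem corollary1 (R : realType) (V : finType) (Ed : {set V * V}) (vo vd : V)
  (paths : seq (seq (V * V))) (m z : nat) (C : 'I_m -> V * V -> R -> R)
  (q : 'I_m -> R) (Phi : 'M[R]_(z, m)) (u : 'I_z)
  (f1 f2 : seq (V * V) -> R) :
  enumerates_paths Ed vo vd paths ->
  admissible_costs C ->
  prior q ->
  signalling_scheme Phi ->
  0 < \sum_(l < m) Phi u l * q l ->
  wardrop paths C (posterior Phi q u) f1 ->
  wardrop paths C (posterior Phi q u) f2 ->
  S_set paths C Phi u f1 = S_set paths C Phi u f2.
Proof.
move=> [_ paths_od] C_adm [[q_ge0 _] _] [Phi_ge0 _] mass_gt0 W1 W2.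
have paths_uniq p : p \in paths -> uniq p by move/paths_od/od_path_uniq.
have [post_ge0 post_sum1] := posterior_simplex (Phi_ge0 u) q_ge0 mass_gt0.
have [s0 _ post_pos] := exists_pos_of_sum1 (fun s _ => post_ge0 s) post_sum1.
have C_incr s e : strictly_increasing_nonneg (C s e) by case: (C_adm s e) => _ [].
have same_flow := wardrop_edge_flow_unique paths_uniq post_ge0
  (ex_intro _ s0 post_pos) C_incr W1 W2.
have [f1feas f2feas] := (proj1 W1, proj1 W2).
apply/seteqP; split.
  exact: S_set_edge_flow paths_uniq f1feas f2feas same_flow.
exact: S_set_edge_flow paths_uniq f2feas f1feas (fsym same_flow).
Qed.
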